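(* Let $(S,* )$ be a finite indecomposable cycle set of size $n$, with class $d$ and permutation group $\mathcal G$. Then $n$ divides $|\mathcal G|$. In particular, every prime divisor of $n$ is a prime divisor of $|\mathcal G|$ and of $d$, and if $d$ is a power of a prime $p$ then $n$ is also a power of $p$.
   Context: A cycle set is a set $S$ with a binary operation $*$ such that each $t\mapsto s*t$ is bijective and $(s*t)*(s*u)=(t*s)*(t*u)$ for all $s,t,u$. Write $S=\{s_1,\dots,s_n\}$, let $\psi(s)\in\mathfrak S_n$ satisfy $s_i*s_j=s_{\psi(s_i)(j)}$, and $\mathcal G=\langle\psi(s_1),\dots,\psi(s_n)\rangle\le\mathfrak S_n$, acting on $S$ via $\sigma(s_j)=s_{\sigma(j)}$. $S$ is decomposable if there is a partition $S=X\sqcup Y$ with $X,Y$ nonempty and $\psi(s)(X)\subseteq X$, $\psi(s)(Y)\subseteq Y$ for all $s\in S$; otherwise it is indecomposable. With $T(s)=s*s$ and $\psi_k(s)=\psi(T^{k-1}(s))\circ\cdots\circ\psi(s)$, the class $d$ is the least integer $d\ge1$ with $\psi_d(s)=\mathrm{id}$ for all $s$. *)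

From mathcomp Require Import all_boot all_fingroup.
Set Implicit Arguments. Unset Strict Implicit. Unset Printing Implicit Defensive.

Record cycle_set (S : finType) := CycleSet {
  cs_op : S -> S -> S;
  cs_bij : forall s : S, bijective (cs_op s);
  cs_eq : forall s t u : S,
    cs_op (cs_op s t) (cs_op s u) = cs_op (cs_op t s) (cs_op t u)
}.

Section CycleSetDefs.
Variables (S : finType) (C : cycle_set S).

Definition psi (s : S) : {perm S} := perm (bij_inj (cs_bij C s)).

Definition Gpsi : {group {perm S}} := <<[set psi s | s : S]>>%G.

Definition Tsq (s : S) : S := cs_op C s s.

(* psi_k(s) = psi(T^{k-1} s) o ... o psi(s); in {perm S}, (p * q) x = q (p x) *)
Fixpoint psik (k : nat) (s : S) : {perm S} :=
  match k with
  | 0 => 1%g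
  | k'.+1 => (psik k' s * psi (iter k' Tsq s))%g
  end.

Definition decomposable : Prop :=
  exists X : {set S}, [/\ X != set0, ~: X != set0,
    (forall s x, x \in X -> psi s x \in X) &
    (forall s x, x \in ~: X -> psi s x \in ~: X)].

Definition indecomposable : Prop := ~ decomposable.

Definition is_class (d : nat) : Prop :=
  [/\ 0 < d, (forall s, psik d s = 1%g) &
      (forall d', 0 < d' -> (forall s, psik d' s = 1%g) -> d <= d')].

End CycleSetDefs.

From mathcomp Require Import all_boot all_fingroup.
Set Implicit Arguments. Unset Strict Implicit. Unset Printing Implicit Defensive.

(* Indecomposability means that G acts transitively on S, so n = #|S| is the
   length of an orbit and divides #|G|.  For the rest it suffices to show
   that #|G| divides d ^ n.  To a word x_1 ... x_k over S attach
   Lam(x_1 ... x_k) = psi(x_1) psi(mu_1 x_2) ... psi(mu_(k-1) x_k) in G, where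
   mu_i = Lam(x_1 ... x_i).  The cycle set identity says exactly that
   swapping two adjacent letters does not change Lam, and psi_d(s) = 1 says
   that d consecutive copies of a letter can be erased, so Lam only depends on
   the multiplicities of the letters modulo d: it is a map (Z/d)^S -> G.  It
   is onto, and the cocycle rule Lam(uv) = Lam(u) Lam(Lam(u) v) provides, for
   each g in G, an injection of the fibre over 1 into the fibre over g and
   back; all fibres thus have the same size and #|G| divides d ^ n. *)

Lemma count_mem_flatten_nseq (T : finType) (m : T -> nat) z :
  count_mem z (flatten [seq nseq (m y) y | y <- enum T]) = m z.
Proof.
rewrite count_flatten -map_comp sumnE big_map.
rewrite (bigD1_seq z) ?mem_enum ?enum_uniq //= count_nseq /= eqxx mul1n.
by rewrite big1 ?addn0 // => y /negbTE; rewrite count_nseq /= eq_sym => ->.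
Qed.

Section CycleSetWords.
Variables (S : finType) (C : cycle_set S).
Local Open Scope group_scope.

Lemma psiE s t : psi C s t = cs_op C s t.
Proof. by rewrite permE. Qed.

Lemma psi_in_Gpsi s : psi C s \in Gpsi C.
Proof. by rewrite mem_gen // imset_f. Qed.

Fixpoint lam (mu : {perm S}) (w : seq S) : {perm S} :=
  if w is x :: w' then lam (mu * psi C (mu x)) w' else mu.

Definition Lam : seq S -> {perm S} := lam 1.

Lemma lam_cat mu u v : lam mu (u ++ v) = lam (lam mu u) v.
Proof. by elim: u mu => //= x u IHu mu. Qed.

Lemma lam_mulg mu nu w : lam (mu * nu) w = mu * lam nu (map mu w).
Proof. by elim: w nu => //= x w IHw nu; rewrite permM -mulgA IHw. Qed.

Lemma lam_in_Gpsi mu w : mu \in Gpsi C -> lam mu w \in Gpsi C.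
Proof.
by elim: w mu => //= x w IHw mu muG; rewrite IHw // groupM ?psi_in_Gpsi.
Qed.

Lemma lam_swap mu x y w : lam mu [:: x, y & w] = lam mu [:: y, x & w].
Proof.
rewrite /=; congr lam; rewrite !permM -!mulgA; congr (_ * _).
by apply/permP => z; rewrite !permM !psiE cs_eq.
Qed.

Lemma lam_perm_eq mu u v : perm_eq u v -> lam mu u = lam mu v.
Proof.
elim: u v mu => [|x u IHu] v mu eq_uv; first by case: v eq_uv => // y v /perm_size.
have xv : x \in v by rewrite -(perm_mem eq_uv) mem_head.
have lam_rem m : x \in m -> lam mu m = lam mu (x :: rem x m).
  elim: m mu {eq_uv xv} => //= y m IHm mu; rewrite inE.
  have [-> //|neq_yx /= xm] := eqVneq y x.
  by rewrite IHm // -[RHS]/(lam mu [:: x, y & rem x m]) lam_swap.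
rewrite (lam_rem v xv) /=; apply: IHu.
by rewrite -(perm_cons x) (perm_trans eq_uv) // perm_to_rem.
Qed.

Lemma Lam_cat u v : Lam (u ++ v) = Lam u * Lam (map (Lam u) v).
Proof. by rewrite /Lam lam_cat -lam_mulg mulg1. Qed.

Lemma Lam_rcons w x : Lam (rcons w x) = Lam w * psi C (Lam w x).
Proof. by rewrite -cats1 /Lam lam_cat. Qed.

Lemma psik_self k s : psik C k s s = iter k (Tsq C) s.
Proof. by elim: k => [|k IHk] /=; rewrite ?perm1 // permM IHk psiE. Qed.

Lemma Lam_nseq k s : Lam (nseq k s) = psik C k s.
Proof.
elim: k => [|k IHk] //.
by rewrite -[in LHS]addn1 nseqD cats1 Lam_rcons IHk psik_self.
Qed.

Lemma Gpsi_Lam g : g \in Gpsi C -> exists w, Lam w = g.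
Proof.
case/gen_prodgP=> k [c cA ->]; elim: k c cA => [|k IHk] c cA.
  by exists [::]; rewrite big_ord0.
have [w Lw] := IHk (fun i => c (widen_ord (leqnSn k) i)) (fun i => cA _).
have /imsetP[s _ cE] := cA ord_max.
by exists (rcons w ((Lam w)^-1 s)); rewrite big_ord_recr Lam_rcons permKV Lw cE.
Qed.

Section ExponentVectors.
Variables (d : nat) (d_gt0 : 0 < d) (psik_d : forall s, psik C d s = 1).

Lemma Lam_cat_nseq_muln w x q : Lam (w ++ nseq (q * d) x) = Lam w.
Proof.
elim: q w => [|q IHq] w; first by rewrite cats0.
by rewrite mulSn nseqD catA IHq Lam_cat map_nseq Lam_nseq psik_d mulg1.
Qed.

Lemma Lam_cat_flatten_muln w (q : S -> nat) s :
  Lam (w ++ flatten [seq nseq (q y * d) y | y <- s]) = Lam w.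
Proof.
elim: s w => [|y s IHs] w /=; first by rewrite cats0.
by rewrite catA IHs Lam_cat_nseq_muln.
Qed.

Definition word_of (c : {ffun S -> 'I_d}) : seq S :=
  flatten [seq nseq (c y) y | y <- enum S].

Definition mults (w : seq S) : {ffun S -> 'I_d} :=
  [ffun y => Ordinal (ltn_pmod (count_mem y w) d_gt0)].

Lemma Lam_mults w : Lam w = Lam (word_of (mults w)).
Proof.
rewrite -[in RHS](Lam_cat_flatten_muln _ (fun y => count_mem y w %/ d) (enum S)).
apply: lam_perm_eq; apply/allP => z _ /=.
by rewrite count_cat !count_mem_flatten_nseq ffunE /= addnC -divn_eq.
Qed.

Definition lamc (c : {ffun S -> 'I_d}) : {perm S} := Lam (word_of c).

Lemma lamc_in_Gpsi c : lamc c \in Gpsi C.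
Proof. exact/lam_in_Gpsi/group1. Qed.

Lemma Gpsi_lamc g : g \in Gpsi C -> exists c, lamc c = g.
Proof. by case/Gpsi_Lam=> w <-; exists (mults w); rewrite /lamc -Lam_mults. Qed.

Definition twadd (a b : {ffun S -> 'I_d}) : {ffun S -> 'I_d} :=
  mults (word_of a ++ map (lamc a)^-1 (word_of b)).

Lemma twaddE a b y : twadd a b y = (a y + b (lamc a y)) %% d :> nat.
Proof.
rewrite ffunE /= count_cat count_mem_flatten_nseq count_map.
rewrite -(count_mem_flatten_nseq (fun y => b y) (lamc a y)); congr ((_ + _) %% d).
by apply: eq_count => z /=; rewrite -(inj_eq (@perm_inj _ (lamc a))) permKV.
Qed.

Lemma twadd_inj a : injective (twadd a).
Proof.
move=> b b' /ffunP eq_ab; apply/ffunP => z; apply/val_inj.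
move/(congr1 (@nat_of_ord d)): (eq_ab ((lamc a)^-1 z)).
rewrite !twaddE permKV => /eqP.
by rewrite eqn_modDl !modn_small // => /eqP.
Qed.

Lemma lamc_twadd a b : lamc (twadd a b) = lamc a * lamc b.
Proof.
rewrite /lamc -Lam_mults Lam_cat -map_comp.
by congr (_ * Lam _); rewrite -[RHS]map_id; apply: eq_map => y /=; rewrite permKV.
Qed.

Definition fiber (g : {perm S}) : {set {ffun S -> 'I_d}} := [set c | lamc c == g].

Lemma card_fiber g : g \in Gpsi C -> #|fiber g| = #|fiber 1|.
Proof.
have le_fiber a h : #|fiber h| <= #|fiber (lamc a * h)|.
  rewrite -(card_imset _ (@twadd_inj a)); apply/subset_leq_card/subsetP.
  by move=> _ /imsetP[b + ->]; rewrite !inE lamc_twadd => /eqP->.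
move=> gG; have [a La] := Gpsi_lamc gG; have [a' La'] := Gpsi_lamc (groupVr gG).
apply/eqP; rewrite eqn_leq; apply/andP; split.
  by have := le_fiber a' g; rewrite La' mulVg.
by have := le_fiber a 1; rewrite mulg1 La.
Qed.

Lemma card_Gpsi_dvd_expn : #|Gpsi C| %| (d ^ #|S|)%N.
Proof.
have -> : (d ^ #|S| = #|Gpsi C| * #|fiber 1|)%N.
  rewrite -[in LHS](card_ord d) -card_ffun -[LHS]sum1_card.
  rewrite (partition_big lamc (mem (Gpsi C))) => [|c _]; last exact: lamc_in_Gpsi.
  rewrite -sum_nat_const; apply: eq_bigr => g gG.
  by rewrite -(card_fiber gG) sum1dep_card; apply: eq_card => c; rewrite !inE.
exact: dvdn_mulr.
Qed.

End ExponentVectors.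

Lemma orbit_Gpsi x : indecomposable C -> orbit 'P (Gpsi C) x = setT.
Proof.
set X := orbit _ _ _ => indec.
have XG g y : g \in Gpsi C -> y \in X -> g y \in X.
  move=> gG /orbitP[h hG <-]; apply/orbitP; exists (h * g); first exact: groupM.
  by rewrite /= !apermE permM.
have [// | neqXT] := eqVneq X setT; case: indec; exists X; split.
- by apply/set0Pn; exists x; apply: orbit_refl.
- by apply: contra neqXT => /eqP h; rewrite -[X]setCK h setC0.
- by move=> s y; apply: XG; apply: psi_in_Gpsi.
- move=> s y; rewrite !inE; apply: contra => h.
  by rewrite -(permK (psi C s) y) XG ?groupV ?psi_in_Gpsi.
Qed.

Lemma card_dvd_Gpsi : 0 < #|S| -> indecomposable C -> #|S| %| #|Gpsi C|.
Proof.
case/card_gt0P=> x _ indec.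
by rewrite -cardsT -(orbit_Gpsi x indec) card_orbit dvdn_indexg.
Qed.

End CycleSetWords.

Theorem mainTheorem7 (S : finType) (C : cycle_set S) (d : nat) :
  0 < #|S| -> indecomposable C -> is_class C d ->
  [/\ #|S| %| #|Gpsi C|,
      (forall p, prime p -> p %| #|S| -> p %| #|Gpsi C| /\ p %| d) &
      (forall p k, prime p -> d = p ^ k -> exists m, #|S| = p ^ m)].
Proof.
move=> S_gt0 indec [d_gt0 psik_d _].
have nG := card_dvd_Gpsi S_gt0 indec.
have nd : #|S| %| d ^ #|S| := dvdn_trans nG (card_Gpsi_dvd_expn d_gt0 psik_d).
split=> // [p p_pr pn | p k p_pr dE].
  split; first exact: dvdn_trans pn nG.
  by have := dvdn_trans pn nd; rewrite Euclid_dvdX // => /andP[].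
rewrite dE -expnM in nd.
by have [m _ ->] := dvdn_pfactor _ _ p_pr nd; exists m.
Qed.
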